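(* For any positive integers $n$ and $k$ there exists a QCQP in $N:=nk$ variables with $m:=k+1$ constraints such that: Assumptions A and C hold; the quadratic eigenvalue multiplicity of the QCQP equals $k$; $k\ge \operatorname{affdim}(\{b(\gamma):\gamma\in\mathcal F\})$ for every semidefinite face $\mathcal F$ of $\Gamma$; but $\mathrm{Opt}\neq\mathrm{Opt}_{\mathrm{SDP}}$ (and hence $\operatorname{conv}(\mathcal D)\neq\mathcal D_{\mathrm{SDP}}$).
   Context: A QCQP is given by integers $N\ge 1$, $m_I,m_E\ge 0$, $m:=m_I+m_E\ge 1$ and, for $i\in[0,m]$ ($[a,b]=\{a,\dots,b\}$, $[n]=[1,n]$), $q_i(x)=x^\top A_ix+2b_i^\top x+c_i$ with $A_i\in\mathbb S^N$, $b_i\in\mathbb R^N$, $c_i\in\mathbb R$. $\mathrm{Opt}:=\inf\{q_0(x): q_i(x)\le 0\ \forall i\in[m_I],\ q_i(x)=0\ \forall i\in[m_I+1,m]\}$; $\mathcal D:=\{(x,t): q_0(x)\le 2t$ and the same constraints$\}$. With $Q_i=\begin{pmatrix}c_i& b_i^\top\\ b_i& A_i\end{pmatrix}$: $\mathrm{Opt}_{\mathrm{SDP}}:=\inf\{\langle Q_0,Y\rangle: Y=\begin{pmatrix}1&x^\top\\ x& X\end{pmatrix}\succeq 0,\ X\in\mathbb S^N,\ \langle Q_i,Y\rangle\le 0\ \forall i\in[m_I],\ \langle Q_i,Y\rangle=0\ \forall i\in[m_I+1,m]\}$; $\mathcal D_{\mathrm{SDP}}:=\{(x,t):\exists X$ with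 $Y\succeq0$, $\langle Q_0,Y\rangle\le 2t$ and the same constraints$\}$. $A(\gamma)=A_0+\sum\gamma_iA_i$, $b(\gamma)=b_0+\sum\gamma_ib_i$; $\Gamma:=\{\gamma\in\mathbb R^m: A(\gamma)\succeq0,\ \gamma_i\ge0\ \forall i\in[m_I]\}$. Assumption A: the QCQP feasible set is nonempty and some $\gamma^*$ with $\gamma^*_i\ge0$ ($i\in[m_I]$) has $A(\gamma^* )\succ0$. Assumption C: $\Gamma$ is a polyhedron. A nonempty face $\mathcal F$ of $\Gamma$ is semidefinite if no $\gamma\in\mathcal F$ has $A(\gamma)\succ0$. The quadratic eigenvalue multiplicity is the largest integer $k$ (with $N=nk$) such that each $A_i=I_k\otimes\mathcal A_i$ for some $\mathcal A_i\in\mathbb S^n$. $\operatorname{affdim}$ is the dimension of the affine hull. *)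

(* Stdlib reals. Vectors are nat -> R (only indices < N matter),
   matrices nat -> nat -> R. *)
From Stdlib Require Import Reals Lra Lia.
Open Scope R_scope.

Definition vec := nat -> R.
Definition mat := nat -> nat -> R.

Fixpoint rsum (n : nat) (f : nat -> R) : R :=
  match n with O => 0 | S n' => rsum n' f + f n' end.

Definition dot (N : nat) (x y : vec) : R := rsum N (fun i => x i * y i).
Definition quad (N : nat) (A : mat) (x : vec) : R :=
  rsum N (fun i => rsum N (fun j => x i * A i j * x j)).
Definition symm (N : nat) (A : mat) : Prop :=
  forall i j, (i < N)%nat -> (j < N)%nat -> A i j = A j i.
Definition psd (N : nat) (A : mat) : Prop := symm N A /\ forall x : vec, 0 <= quad N A x.
Definition pd (N : nat) (A : mat) : Prop :=
  symm N A /\ forall x : vec, (exists i, (i < N)%nat /\ x i <> 0) -> 0 < quad N A x.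

(* A QCQP: data q_i(x) = x^T A_i x + 2 b_i^T x + c_i for i in [0, m], m = mI + mE *)
Record QCQP := mkQCQP {
  qN : nat; qmI : nat; qmE : nat;
  qA : nat -> mat; qb : nat -> vec; qc : nat -> R }.

Definition qm (P : QCQP) : nat := (qmI P + qmE P)%nat.

Definition wf_QCQP (P : QCQP) : Prop :=
  (1 <= qN P)%nat /\ (1 <= qm P)%nat /\ forall i, (i <= qm P)%nat -> symm (qN P) (qA P i).

Definition qfun (P : QCQP) (i : nat) (x : vec) : R :=
  quad (qN P) (qA P i) x + 2 * dot (qN P) (qb P i) x + qc P i.

Definition feasible (P : QCQP) (x : vec) : Prop :=
  (forall i, (1 <= i <= qmI P)%nat -> qfun P i x <= 0) /\
  (forall i, (qmI P + 1 <= i <= qm P)%nat -> qfun P i x = 0).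

Inductive ereal := EFin (r : R) | EPInf | EMInf.
Definition ele (a b : ereal) : Prop :=
  match a, b with
  | EMInf, _ => True
  | _, EPInf => True
  | EFin x, EFin y => x <= y
  | _, _ => False
  end.
Definition is_inf (S : R -> Prop) (e : ereal) : Prop :=
  (forall v, S v -> ele e (EFin v)) /\
  (forall e', (forall v, S v -> ele e' (EFin v)) -> ele e' e).

Definition IsOpt (P : QCQP) (e : ereal) : Prop :=
  is_inf (fun v => exists x, feasible P x /\ v = qfun P 0 x) e.

(* Y = [[1, x^T]; [x, X]] and Q_i = [[c_i, b_i^T]; [b_i, A_i]], size N+1 *)
Definition Ymat (x : vec) (X : mat) : mat := fun i j =>
  match i, j with
  | O, O => 1 | O, S j' => x j' | S i', O => x i' | S i', S j' => X i' j' end.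
Definition Qmat (P : QCQP) (k : nat) : mat := fun i j =>
  match i, j with
  | O, O => qc P k | O, S j' => qb P k j' | S i', O => qb P k i'
  | S i', S j' => qA P k i' j' end.
Definition frob (n : nat) (A B : mat) : R := rsum n (fun i => rsum n (fun j => A i j * B i j)).
Definition sdpval (P : QCQP) (k : nat) (x : vec) (X : mat) : R :=
  frob (S (qN P)) (Qmat P k) (Ymat x X).

Definition sdp_feasible (P : QCQP) (x : vec) (X : mat) : Prop :=
  symm (qN P) X /\ psd (S (qN P)) (Ymat x X) /\
  (forall i, (1 <= i <= qmI P)%nat -> sdpval P i x X <= 0) /\
  (forall i, (qmI P + 1 <= i <= qm P)%nat -> sdpval P i x X = 0).

Definition IsOptSDP (P : QCQP) (e : ereal) : Prop :=
  is_inf (fun v => exists x X, sdp_feasible P x X /\ v = sdpval P 0 x X) e.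

Definition Dset (P : QCQP) (x : vec) (t : R) : Prop := feasible P x /\ qfun P 0 x <= 2 * t.
Definition DSDP (P : QCQP) (x : vec) (t : R) : Prop :=
  exists X, sdp_feasible P x X /\ sdpval P 0 x X <= 2 * t.

Definition convD (P : QCQP) (x : vec) (t : R) : Prop :=
  exists (K : nat) (lam : nat -> R) (xs : nat -> vec) (ts : nat -> R),
    (forall j, (j < K)%nat -> 0 <= lam j /\ Dset P (xs j) (ts j)) /\
    rsum K lam = 1 /\
    (forall i, (i < qN P)%nat -> x i = rsum K (fun j => lam j * xs j i)) /\
    t = rsum K (fun j => lam j * ts j).

(* multipliers gamma in R^m are represented by functions with support in [1, m] *)
Definition canon (P : QCQP) (g : nat -> R) : Prop :=
  forall i, (i = 0 \/ qm P < i)%nat -> g i = 0.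

Definition Agam (P : QCQP) (g : nat -> R) : mat :=
  fun r s => qA P 0 r s + rsum (S (qm P)) (fun i => match i with O => 0 | _ => g i * qA P i r s end).
Definition bgam (P : QCQP) (g : nat -> R) : vec :=
  fun r => qb P 0 r + rsum (S (qm P)) (fun i => match i with O => 0 | _ => g i * qb P i r end).

Definition Gamma (P : QCQP) (g : nat -> R) : Prop :=
  canon P g /\ psd (qN P) (Agam P g) /\ (forall i, (1 <= i <= qmI P)%nat -> 0 <= g i).

Definition AssumptionA (P : QCQP) : Prop :=
  (exists x, feasible P x) /\
  (exists g, canon P g /\ (forall i, (1 <= i <= qmI P)%nat -> 0 <= g i) /\ pd (qN P) (Agam P g)).

Definition AssumptionC (P : QCQP) : Prop :=
  exists (K : nat) (a : nat -> nat -> R) (beta : nat -> R),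
    forall g, canon P g ->
      (Gamma P g <-> forall j, (j < K)%nat -> rsum (S (qm P)) (fun i => a j i * g i) <= beta j).

Definition face (P : QCQP) (F : (nat -> R) -> Prop) : Prop :=
  (exists g, F g) /\ (forall g, F g -> Gamma P g) /\
  (forall g1 g2 th, F g1 -> F g2 -> 0 <= th <= 1 ->
      F (fun i => th * g1 i + (1 - th) * g2 i)) /\
  (forall g1 g2 th, Gamma P g1 -> Gamma P g2 -> 0 < th < 1 ->
      F (fun i => th * g1 i + (1 - th) * g2 i) -> F g1 /\ F g2).

Definition semidefinite_face (P : QCQP) (F : (nat -> R) -> Prop) : Prop :=
  face P F /\ ~ (exists g, F g /\ pd (qN P) (Agam P g)).

(* affdim S <= d  (S subset of R^N): the affine hull of S is contained in an
   affine subspace p + span(v_0..v_{d-1}) *)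
Definition affdim_le (N : nat) (S : vec -> Prop) (d : nat) : Prop :=
  exists (p : vec) (v : nat -> vec), forall s, S s ->
    exists c : nat -> R, forall i, (i < N)%nat -> s i = p i + rsum d (fun j => c j * v j i).

(* A_i = I_k (x) B_i for some B_i in S^n, with N = n k, index (a,p) |-> a*n+p *)
Definition kron_structure (P : QCQP) (k : nat) : Prop :=
  exists n : nat, qN P = (n * k)%nat /\
    forall i, (i <= qm P)%nat -> exists B : mat, symm n B /\
      forall a b p q, (a < k)%nat -> (b < k)%nat -> (p < n)%nat -> (q < n)%nat ->
        qA P i (a * n + p)%nat (b * n + q)%nat = if Nat.eqb a b then B p q else 0.

Definition eig_multiplicity (P : QCQP) (k : nat) : Prop :=
  kron_structure P k /\ forall k', kron_structure P k' -> (k' <= k)%nat.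

(* Write x = (x_(0), ..., x_(k-1)) with blocks x_(j) in R^n, and let y_j be the first
   coordinate of x_(j).  The example minimises  |x'|^2 + 2 (y_0 + ... + y_(k-1))  over
   y >= 0, |y| = 1, where x' collects the remaining coordinates.  Every matrix is
   block diagonal with identical blocks, so the eigenvalue multiplicity is k, and
   the only matrix that can lose definiteness is the one of the sphere constraint,
   so Gamma is the orthant {gamma >= 0}; all b(gamma) lie in b_0 + span(b_1..b_k).
   But y >= 0, |y| = 1 forces sum y >= 1, so Opt >= 2, whereas the relaxation is
   solved by x = 0 with X = e_0 e_0^T, of value 0. *)

From Stdlib Require Import Reals Lra Lia Arith Classical FunctionalExtensionality.
Open Scope R_scope.

Lemma rsum_S n f : rsum (S n) f = rsum n f + f n.
Proof. reflexivity. Qed.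

Lemma rsum_ext n f g : (forall i, (i < n)%nat -> f i = g i) -> rsum n f = rsum n g.
Proof. induction n; intros H; [reflexivity|]. rewrite !rsum_S, IHn, H; auto. Qed.

Lemma rsum_eq0 n f : (forall i, (i < n)%nat -> f i = 0) -> rsum n f = 0.
Proof. induction n; intros H; [reflexivity|]. rewrite rsum_S, IHn, H; auto; lra. Qed.

Lemma rsum_single n f m : (m < n)%nat ->
  (forall i, (i < n)%nat -> i <> m -> f i = 0) -> rsum n f = f m.
Proof.
  induction n; intros Hm H; [lia|]. rewrite rsum_S.
  destruct (Nat.eq_dec m n) as [->|Hne].
  - rewrite rsum_eq0; [lra|]. intros; apply H; lia.
  - rewrite IHn, (H n); try lia; [lra|]. intros; apply H; lia.
Qed.

Lemma rsum_shift n f : rsum (S n) f = f 0%nat + rsum n (fun j => f (S j)).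
Proof. induction n; [simpl; lra|]. rewrite rsum_S, IHn, !rsum_S. lra. Qed.

Lemma rsum_scal n c f : rsum n (fun j => c * f j) = c * rsum n f.
Proof. induction n; [simpl; lra|]. rewrite !rsum_S, IHn. lra. Qed.

Lemma rsum_le n f g : (forall i, (i < n)%nat -> f i <= g i) -> rsum n f <= rsum n g.
Proof.
  induction n; intros H; [simpl; lra|]. rewrite !rsum_S.
  pose proof (H n ltac:(lia)). pose proof (IHn ltac:(intros; apply H; lia)). lra.
Qed.

Lemma rsum_nonneg n f : (forall i, (i < n)%nat -> 0 <= f i) -> 0 <= rsum n f.
Proof.
  intros H. rewrite <- (rsum_eq0 n (fun _ => 0)) by reflexivity. now apply rsum_le.
Qed.

Lemma rsum_term_le n f m : (m < n)%nat -> (forall i, (i < n)%nat -> 0 <= f i) ->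
  f m <= rsum n f.
Proof.
  intros Hm H.
  assert (Hf : rsum n (fun i => if (i =? m)%nat then f i else 0) = f m).
  { rewrite (rsum_single _ _ m Hm); [now rewrite Nat.eqb_refl|].
    intros i _ Hi. apply Nat.eqb_neq in Hi. now rewrite Hi. }
  rewrite <- Hf. apply rsum_le. intros i Hi.
  destruct (i =? m)%nat; [lra|]. now apply H.
Qed.

Lemma rsum_sq_le n f : (forall i, (i < n)%nat -> 0 <= f i) ->
  rsum n (fun i => f i * f i) <= rsum n f * rsum n f.
Proof.
  intros H. induction n; [simpl; lra|]. rewrite !rsum_S.
  pose proof (IHn ltac:(intros; apply H; lia)). pose proof (H n ltac:(lia)).
  pose proof (rsum_nonneg n f ltac:(intros; apply H; lia)). nra.
Qed.

Definition diagm (d : nat -> R) : mat := fun r s => if (r =? s)%nat then d r else 0.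

Lemma diagm_symm N d : symm N (diagm d).
Proof.
  intros i j _ _. unfold diagm.
  destruct (Nat.eqb_spec i j), (Nat.eqb_spec j i); subst; congruence.
Qed.

Lemma rsum_diagm_row n d f i : (i < n)%nat ->
  rsum n (fun j => f j * diagm d i j) = f i * d i.
Proof.
  intros Hi. rewrite (rsum_single _ _ i Hi); unfold diagm.
  - now rewrite Nat.eqb_refl.
  - intros j _ Hj. apply not_eq_sym, Nat.eqb_neq in Hj. rewrite Hj. lra.
Qed.

Lemma quad_diagm N d x : quad N (diagm d) x = rsum N (fun r => d r * (x r * x r)).
Proof.
  apply rsum_ext. intros i Hi.
  rewrite (rsum_ext _ _ (fun j => (x i * x j) * diagm d i j)) by (intros; lra).
  rewrite rsum_diagm_row by exact Hi. lra.
Qed.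

Lemma frob_diagm N A d : frob N A (diagm d) = rsum N (fun i => A i i * d i).
Proof.
  apply rsum_ext. intros i Hi. exact (rsum_diagm_row N d (A i) i Hi).
Qed.

Definition unitv (i : nat) : vec := fun r => if (r =? i)%nat then 1 else 0.

Lemma psd_diagm N d : psd N (diagm d) <-> forall i, (i < N)%nat -> 0 <= d i.
Proof.
  split.
  - intros [_ Hq] i Hi. specialize (Hq (unitv i)). rewrite quad_diagm in Hq.
    rewrite (rsum_single _ _ i Hi) in Hq; unfold unitv in *.
    + rewrite Nat.eqb_refl in Hq. lra.
    + intros j _ Hj. apply Nat.eqb_neq in Hj. rewrite Hj. lra.
  - intros H. split; [apply diagm_symm|]. intros x. rewrite quad_diagm.
    apply rsum_nonneg. intros i Hi. pose proof (H i Hi). nra.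
Qed.

Lemma pd_diagm N d : (forall i, (i < N)%nat -> 0 < d i) -> pd N (diagm d).
Proof.
  intros H. split; [apply diagm_symm|]. intros x [i [Hi Hx]]. rewrite quad_diagm.
  assert (0 < d i * (x i * x i)).
  { apply Rmult_lt_0_compat; [now apply H|]. destruct (Rlt_or_le 0 (x i)); [nra|].
    assert (x i < 0) by lra. nra. }
  eapply Rlt_le_trans; [eassumption|]. apply (rsum_term_le _ (fun r => d r * (x r * x r)) i Hi).
  intros j Hj. pose proof (H j Hj). nra.
Qed.

Lemma inf_exists (S : R -> Prop) : exists e, is_inf S e.
Proof.
  destruct (classic (exists v, S v)) as [[v0 Hv0]|Hne].
  2:{ exists EPInf. split; [intros v Hv; exfalso; eauto|]. now intros [r| |] _. }
  destruct (classic (exists m, forall v, S v -> m <= v)) as [[m Hm]|Hnb].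
  - destruct (completeness (fun y => S (- y))) as [l [Hub Hl]].
    + exists (- m). intros y Hy. specialize (Hm _ Hy). lra.
    + exists (- v0). now rewrite Ropp_involutive.
    + exists (EFin (- l)). split.
      * intros v Hv. assert (- v <= l) by (apply Hub; now rewrite Ropp_involutive).
        simpl. lra.
      * intros [r| |] He; simpl; auto.
        -- assert (l <= - r); [|lra].
           apply Hl. intros y Hy. specialize (He _ Hy). simpl in He. lra.
        -- exact (He _ Hv0).
  - exists EMInf. split; [now intros|].
    intros [r| |] He; simpl; auto.
    + apply Hnb. exists r. intros v Hv. exact (He _ Hv).
    + exact (He _ Hv0).
Qed.

Lemma is_inf_separated (S T : R -> Prop) eS eT a b :
  is_inf S eS -> is_inf T eT -> (forall v, S v -> a <= v) -> T b -> b < a -> eS <> eT.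
Proof.
  intros [_ HS] [HT _] Ha Hb Hba ->.
  assert (Hlow : ele (EFin a) eT) by (apply HS; intros v Hv; exact (Ha v Hv)).
  specialize (HT b Hb). destruct eT; simpl in *; lra || contradiction.
Qed.

Lemma convD_lower_bound P c x t :
  (forall y s, Dset P y s -> c <= s) -> convD P x t -> c <= t.
Proof.
  intros Hc [K [lam [xs [ts [Hj [Hsum [_ ->]]]]]]].
  rewrite <- (Rmult_1_r c), <- Hsum, <- rsum_scal. apply rsum_le.
  intros j Hjk. destruct (Hj j Hjk) as [Hl [Hf Hq]].
  pose proof (Hc (xs j) (ts j) (conj Hf Hq)). nra.
Qed.

Section Example.

Variables n k : nat.

Definition block_head (r : nat) : bool := (r mod n =? 0)%nat.

Definition ex_diag (i p : nat) : R :=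
  match i with
  | O => if (p =? 0)%nat then 0 else 1
  | S _ => if (i =? S k)%nat then (if (p =? 0)%nat then 1 else 0) else 0
  end.

Definition ex_A (i : nat) : mat := diagm (fun r => ex_diag i (r mod n)).

Definition ex_b (i : nat) : vec := fun r =>
  match i with
  | O => if block_head r then 1 else 0
  | S j => if ((r =? j * n)%nat && (j <? k)%nat)%bool then -1 else 0
  end.

Definition ex_c (i : nat) : R := if (i =? S k)%nat then -1 else 0.

(* Constraints 1..k are the inequalities y_j >= 0, constraint k+1 is |y|^2 = 1. *)
Definition example : QCQP := mkQCQP (n * k) k 1 ex_A ex_b ex_c.

Lemma qm_example : qm example = S k.
Proof. apply Nat.add_1_r. Qed.

Lemma ex_diag_mid j p : (j < k)%nat -> ex_diag (S j) p = 0.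
Proof. intros Hj. simpl. apply Nat.lt_neq, Nat.eqb_neq in Hj. now rewrite Hj. Qed.

Lemma ex_diag_top p : ex_diag (S k) p = if (p =? 0)%nat then 1 else 0.
Proof. simpl. now rewrite Nat.eqb_refl. Qed.

Lemma block_head_0 : block_head 0 = true.
Proof. unfold block_head. now rewrite Nat.Div0.mod_0_l. Qed.

Lemma qfun_example_obj x : qfun example 0 x =
  rsum (n * k) (fun r => if block_head r then 0 else x r * x r) +
  2 * rsum (n * k) (fun r => if block_head r then x r else 0).
Proof.
  unfold qfun, example, ex_A; cbn [qN qA qb qc]. rewrite quad_diagm. unfold ex_c, dot; simpl.
  rewrite Rplus_0_r. f_equal; [|f_equal]; apply rsum_ext; intros r _;
    unfold block_head; destruct (r mod n =? 0)%nat; lra.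
Qed.

Lemma qfun_example_sign (n_pos : (1 <= n)%nat) j x :
  (j < k)%nat -> qfun example (S j) x = -2 * x (j * n)%nat.
Proof.
  intros Hj. unfold qfun, example, ex_A; cbn [qN qA qb qc]. rewrite quad_diagm, rsum_eq0.
  2:{ intros r _. rewrite ex_diag_mid by exact Hj. lra. }
  unfold dot, ex_c. rewrite (rsum_single _ _ (j * n)%nat) by
    (nia || (intros r _ Hr; simpl; apply Nat.eqb_neq in Hr; rewrite Hr; simpl; lra)).
  simpl. rewrite Nat.eqb_refl, (proj2 (Nat.ltb_lt j k) Hj).
  destruct (Nat.eqb_spec j k); [lia|]. simpl. lra.
Qed.

Lemma qfun_example_sphere x : qfun example (S k) x =
  rsum (n * k) (fun r => if block_head r then x r * x r else 0) - 1.
Proof.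
  unfold qfun, example, ex_A; cbn [qN qA qb qc]. rewrite quad_diagm. unfold dot, ex_c.
  rewrite (rsum_eq0 _ (fun i => _ * x i)).
  2:{ intros r _. simpl. rewrite Nat.ltb_irrefl, Bool.andb_false_r. lra. }
  rewrite Nat.eqb_refl.
  rewrite (rsum_ext _ _ (fun r => if block_head r then x r * x r else 0)); [lra|].
  intros r _. rewrite ex_diag_top. unfold block_head. destruct (_ =? _)%nat; lra.
Qed.

Lemma feasible_example (n_pos : (1 <= n)%nat) x : feasible example x <->
  (forall j, (j < k)%nat -> 0 <= x (j * n)%nat) /\
  rsum (n * k) (fun r => if block_head r then x r * x r else 0) = 1.
Proof.
  unfold feasible. rewrite qm_example. change (qmI example) with k. split.
  - intros [Hi He]. split.
    + intros j Hj. specialize (Hi (S j) ltac:(lia)).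
      rewrite (qfun_example_sign n_pos) in Hi by exact Hj. lra.
    + specialize (He (S k) ltac:(lia)). rewrite qfun_example_sphere in He. lra.
  - intros [Hy Hs]. split.
    + intros [|j] Hj; [lia|]. specialize (Hy j ltac:(lia)).
      rewrite (qfun_example_sign n_pos) by lia. lra.
    + intros i Hi. replace i with (S k) by lia. rewrite qfun_example_sphere. lra.
Qed.

Lemma qfun_example_ge_2 (n_pos : (1 <= n)%nat) x : feasible example x -> 2 <= qfun example 0 x.
Proof.
  intros [Hy Hs]%(feasible_example n_pos). rewrite qfun_example_obj.
  set (f := fun r => if block_head r then x r else 0).
  assert (Hf : forall r, (r < n * k)%nat -> 0 <= f r).
  { intros r Hr. unfold f. destruct (block_head r) eqn:Hh; [|lra].
    unfold block_head in Hh. apply Nat.eqb_eq in Hh.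
    replace r with (r / n * n)%nat by (pose proof (Nat.div_mod_eq r n); lia).
    apply Hy. apply Nat.Div0.div_lt_upper_bound. lia. }
  assert (Hsq : rsum (n * k) (fun r => f r * f r) = 1).
  { rewrite <- Hs. apply rsum_ext. intros r _. unfold f. destruct (block_head r); lra. }
  pose proof (rsum_sq_le _ f Hf). pose proof (rsum_nonneg _ f Hf).
  pose proof (rsum_nonneg (n * k) (fun r => if block_head r then 0 else x r * x r)
    ltac:(intros r _; cbv beta; destruct (block_head r); nra)).
  assert (1 <= rsum (n * k) f) by nra. fold f. lra.
Qed.

Lemma Dset_example_t_ge_1 (n_pos : (1 <= n)%nat) x t : Dset example x t -> 1 <= t.
Proof. intros [Hx Ht]. pose proof (qfun_example_ge_2 n_pos x Hx). lra. Qed.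

(** ** The Shor relaxation at x = 0, X = e_0 e_0^T *)

Definition sdp_X : mat := diagm (fun i => if (i =? 0)%nat then 1 else 0).

Lemma Ymat_sdp : Ymat (fun _ => 0) sdp_X = diagm (fun i => if (i <=? 1)%nat then 1 else 0).
Proof.
  extensionality i. extensionality j. unfold diagm, sdp_X.
  destruct i as [|[|i]], j as [|[|j]]; reflexivity.
Qed.

Lemma sdpval_example (n_pos : (1 <= n)%nat) (k_pos : (1 <= k)%nat) i :
  sdpval example i (fun _ => 0) sdp_X = ex_c i + ex_diag i 0.
Proof.
  unfold sdpval. rewrite Ymat_sdp, frob_diagm, rsum_shift. simpl qN.
  rewrite (rsum_single _ _ 0%nat) by (nia || (intros [|j] _ Hj; [lia|simpl; lra])).
  simpl. unfold ex_A, diagm. simpl. rewrite Nat.Div0.mod_0_l. lra.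
Qed.

Lemma sdp_feasible_example (n_pos : (1 <= n)%nat) (k_pos : (1 <= k)%nat) :
  sdp_feasible example (fun _ => 0) sdp_X.
Proof.
  split; [apply diagm_symm|split; [|split]].
  - rewrite Ymat_sdp. apply psd_diagm. intros i _. destruct (i <=? 1)%nat; lra.
  - intros [|j] Hj; simpl in Hj; [lia|].
    rewrite (sdpval_example n_pos k_pos), ex_diag_mid by lia. unfold ex_c.
    destruct (Nat.eqb_spec (S j) (S k)); [lia|lra].
  - intros i Hi. rewrite qm_example in Hi. simpl in Hi. replace i with (S k) by lia.
    rewrite (sdpval_example n_pos k_pos), ex_diag_top. unfold ex_c.
    rewrite Nat.eqb_refl. simpl. lra.
Qed.

Lemma sdpval_example_obj (n_pos : (1 <= n)%nat) (k_pos : (1 <= k)%nat) :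
  sdpval example 0 (fun _ => 0) sdp_X = 0.
Proof. rewrite (sdpval_example n_pos k_pos). unfold ex_c. simpl. lra. Qed.

Lemma IsOpt_ne_IsOptSDP_example (n_pos : (1 <= n)%nat) (k_pos : (1 <= k)%nat) e1 e2 :
  IsOpt example e1 -> IsOptSDP example e2 -> e1 <> e2.
Proof.
  intros H1 H2. apply (is_inf_separated _ _ _ _ 2 0 H1 H2); [|exists (fun _ => 0), sdp_X|lra].
  - intros v [x [Hx ->]]. now apply qfun_example_ge_2.
  - split; [now apply sdp_feasible_example|]. now rewrite sdpval_example_obj.
Qed.

Lemma convD_ne_DSDP_example (n_pos : (1 <= n)%nat) (k_pos : (1 <= k)%nat) :
  ~ (forall x t, convD example x t <-> DSDP example x t).
Proof.
  intros Hiff.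
  assert (Hconv : convD example (fun _ => 0) 0).
  { apply Hiff. exists sdp_X. split; [now apply sdp_feasible_example|].
    rewrite sdpval_example_obj by assumption. lra. }
  pose proof (convD_lower_bound _ 1 _ _ (Dset_example_t_ge_1 n_pos) Hconv). lra.
Qed.

Lemma Agam_example g : Agam example g = diagm (fun r => if block_head r then g (S k) else 1).
Proof.
  extensionality r. extensionality s. unfold Agam. rewrite qm_example, rsum_shift, rsum_S.
  rewrite rsum_eq0.
  2:{ intros j Hj. simpl. unfold ex_A, diagm. rewrite ex_diag_mid by exact Hj.
      destruct (r =? s)%nat; lra. }
  simpl. unfold ex_A, diagm. rewrite ex_diag_top. unfold block_head.
  destruct (r =? s)%nat; [|lra]. simpl. destruct (r mod n =? 0)%nat; lra.
Qed.

Lemma Gamma_example (n_pos : (1 <= n)%nat) (k_pos : (1 <= k)%nat) g : canon example g ->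
  (Gamma example g <-> forall i, (1 <= i <= S k)%nat -> 0 <= g i).
Proof.
  intros Hc. unfold Gamma. rewrite Agam_example, psd_diagm. simpl. split.
  - intros [_ [Hp Hi]] i Hik. destruct (Nat.eq_dec i (S k)) as [->|]; [|apply Hi; lia].
    specialize (Hp 0%nat ltac:(nia)). now rewrite block_head_0 in Hp.
  - intros H. split; [exact Hc|split].
    + intros r _. destruct (block_head r); [apply H; lia|lra].
    + intros i Hi. apply H. lia.
Qed.

Lemma AssumptionA_example (n_pos : (1 <= n)%nat) (k_pos : (1 <= k)%nat) :
  AssumptionA example.
Proof.
  split.
  - exists (unitv 0). apply (feasible_example n_pos). split.
    + intros j _. unfold unitv. destruct (_ =? _)%nat; lra.
    + rewrite (rsum_single _ _ 0%nat) by (nia || (intros r _ Hr; unfold unitv;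
        apply Nat.eqb_neq in Hr; rewrite Hr; destruct (block_head r); lra)).
      rewrite block_head_0. unfold unitv. simpl. lra.
  - exists (unitv (S k)). split; [|split].
    + intros i Hi. rewrite qm_example in Hi. unfold unitv.
      destruct (Nat.eqb_spec i (S k)); [lia|reflexivity].
    + intros i _. unfold unitv. destruct (_ =? _)%nat; lra.
    + rewrite Agam_example. apply pd_diagm. intros r _. unfold unitv.
      rewrite Nat.eqb_refl. destruct (block_head r); lra.
Qed.

Lemma AssumptionC_example (n_pos : (1 <= n)%nat) (k_pos : (1 <= k)%nat) :
  AssumptionC example.
Proof.
  exists (S k), (fun j i => if (i =? S j)%nat then -1 else 0), (fun _ => 0).
  intros g Hc. rewrite (Gamma_example n_pos k_pos g Hc).
  assert (Hsum : forall j, (j < S k)%nat ->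
    rsum (S (qm example)) (fun i => (if (i =? S j)%nat then -1 else 0) * g i) = - g (S j)).
  { intros j Hj. rewrite (rsum_single _ _ (S j)).
    - rewrite Nat.eqb_refl. lra.
    - rewrite qm_example. lia.
    - intros i _ Hi. apply Nat.eqb_neq in Hi. rewrite Hi. lra. }
  split.
  - intros H j Hj. rewrite Hsum by exact Hj. specialize (H (S j) ltac:(lia)). lra.
  - intros H [|j] Hj; [lia|]. specialize (H j ltac:(lia)). rewrite Hsum in H by lia. lra.
Qed.

Lemma block_index_eqb a b p q : (p < n)%nat -> (q < n)%nat ->
  (a * n + p =? b * n + q)%nat = ((a =? b) && (p =? q))%bool.
Proof.
  intros Hp Hq. destruct (Nat.eqb_spec a b) as [->|Hab].
  - simpl. destruct (Nat.eqb_spec p q), (Nat.eqb_spec (b * n + p) (b * n + q)); lia.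
  - simpl. apply Nat.eqb_neq. intros E. apply Hab.
    assert (Hdiv : forall c r, (r < n)%nat -> ((c * n + r) / n)%nat = c).
    { intros c r Hr. rewrite Nat.div_add_l, Nat.div_small by lia. lia. }
    now rewrite <- (Hdiv a p Hp), <- (Hdiv b q Hq), E.
Qed.

Lemma kron_structure_example : kron_structure example k.
Proof.
  exists n. split; [reflexivity|]. intros i _.
  exists (diagm (ex_diag i)). split; [apply diagm_symm|].
  intros a b p q _ _ Hp Hq. simpl. unfold ex_A, diagm.
  rewrite block_index_eqb by assumption.
  destruct (a =? b)%nat; [|reflexivity]. simpl. destruct (p =? q)%nat; [|reflexivity].
  rewrite Nat.add_comm, Nat.Div0.mod_add, Nat.mod_small; auto.
Qed.

(* A block size n' < n would put index n' at the head of the second block,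
   whereas it is not a head for blocks of size n. *)
Lemma kron_structure_example_le (n_pos : (1 <= n)%nat) (k_pos : (1 <= k)%nat) k' :
  kron_structure example k' -> (k' <= k)%nat.
Proof.
  intros [n' [E H]]. simpl in E. apply Nat.nlt_ge. intros Hk'.
  assert (Hn' : (1 <= n' < n)%nat) by nia.
  destruct (H (S k) ltac:(rewrite qm_example; lia)) as [B [_ HB]].
  pose proof (HB 0%nat 0%nat 0%nat 0%nat ltac:(lia) ltac:(lia) ltac:(lia) ltac:(lia)) as H0.
  pose proof (HB 1%nat 1%nat 0%nat 0%nat ltac:(lia) ltac:(lia) ltac:(lia) ltac:(lia)) as H1.
  simpl in H0, H1. rewrite !Nat.add_0_r in H1. rewrite <- H1 in H0.
  unfold ex_A, diagm in H0. rewrite !Nat.eqb_refl, !ex_diag_top, Nat.Div0.mod_0_l,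
    Nat.mod_small in H0 by lia.
  destruct (Nat.eqb_spec n' 0); simpl in H0; lia || lra.
Qed.

Lemma bgam_example g r :
  bgam example g r = ex_b 0 r + rsum k (fun j => g (S j) * ex_b (S j) r).
Proof.
  unfold bgam. rewrite qm_example, rsum_shift, rsum_S. unfold example; cbn [qb].
  replace (ex_b (S k) r) with 0 by (simpl; now rewrite Nat.ltb_irrefl, Bool.andb_false_r).
  lra.
Qed.

Lemma affdim_bgam_example (G : (nat -> R) -> Prop) :
  affdim_le (qN example)
    (fun v => exists g, G g /\ forall r, (r < qN example)%nat -> v r = bgam example g r) k.
Proof.
  exists (ex_b 0), (fun j => ex_b (S j)). intros v [g [_ Hg]].
  exists (fun j => g (S j)). intros r Hr. now rewrite Hg, bgam_example.
Qed.

End Example.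

Theorem mainTheorem15 : forall n k : nat, (1 <= n)%nat -> (1 <= k)%nat ->
  exists P : QCQP,
    qN P = (n * k)%nat /\ qm P = (k + 1)%nat /\ wf_QCQP P /\
    AssumptionA P /\ AssumptionC P /\
    eig_multiplicity P k /\
    (forall F, semidefinite_face P F ->
       affdim_le (qN P) (fun v => exists g, F g /\ forall r, (r < qN P)%nat -> v r = bgam P g r) k) /\
    (exists e1 e2, IsOpt P e1 /\ IsOptSDP P e2 /\ e1 <> e2) /\
    ~ (forall (x : vec) (t : R), convD P x t <-> DSDP P x t).
Proof.
  intros n k Hn Hk. exists (example n k).
  split; [reflexivity|]. split; [reflexivity|]. split.
  { split; [simpl; nia|]. rewrite qm_example. split; [lia|]. intros; apply diagm_symm. }
  split; [now apply AssumptionA_example|]. split; [now apply AssumptionC_example|].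
  split; [split; [apply kron_structure_example|now apply kron_structure_example_le]|].
  split; [intros F _; apply affdim_bgam_example|]. split; [|now apply convD_ne_DSDP_example].
  destruct (inf_exists (fun v => exists x, feasible (example n k) x /\ v = qfun (example n k) 0 x))
    as [e1 H1].
  destruct (inf_exists (fun v => exists x X, sdp_feasible (example n k) x X /\
    v = sdpval (example n k) 0 x X)) as [e2 H2].
  exists e1, e2. split; [exact H1|split; [exact H2|]].
  now apply (IsOpt_ne_IsOptSDP_example n k).
Qed.
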